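(* Let $X$ be a compact Hausdorff space containing at least $n+1$ points, where $n\ge1$, and let $H\subset C(X)$ be an $n$-dimensional Haar subspace, where $C(X)$ is the space of real-valued continuous functions on $X$ with norm $\|f\|=\max_{x\in X}|f(x)|$. Let $A$ be a compact Hausdorff space and $\{f_a\}_{a\in A}\subset C(X)$ with $a\mapsto f_a$ continuous from $A$ into $C(X)$. Let $f^*\in H$ be a best simultaneous approximation to $\{f_a\}$ from $H$ (i.e. $\max_{a\in A}\|f_a-f^*\|\le\max_{a\in A}\|f_a-f\|$ for all $f\in H$) and suppose there exist an integer $k$ with $1\le k\le n+1$, elements $a_1,\dots,a_k\in A$, points $x_1,\dots,x_k\in X$, and positive numbers $\lambda_1,\dots,\lambda_k$ with $\sum_{i=1}^k\lambda_i=1$ such that (i') $\sum_{i=1}^k\lambda_i\,(f_{a_i}(x_i)-f^*(x_i))\,f(x_i)=0$ for all $f\in H$, and (ii) $|f_{a_i}(x_i)-f^*(x_i)|=\|f_{a_i}-f^*\|=\max_{a\in A}\|f_a-f^*\|$ for all $1\le i\le k$. If the points $x_1,\dots,x_k$ are pairwise distinct and the common value in (ii) is nonzero, then there exists $\gamma>0$ such that $$\max_{a\in A}\|f_a-h\|\ge\max_{a\in A}\|f_a-f^*\|+\gamma\|f^*-h\|\quad\text{for all } h\in H.$$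
   Context: An $n$-dimensional subspace $H\subset C(X)$ is a Haar subspace if for any $n$ distinct points $x_1,\dots,x_n\in X$ and any real numbers $r_1,\dots,r_n$ there is a unique $f\in H$ with $f(x_j)=r_j$ for $1\le j\le n$. *)

From HB Require Import structures.
From mathcomp Require Import all_boot all_order all_algebra.
From mathcomp Require Import all_classical all_reals all_analysis.
Set Implicit Arguments. Unset Strict Implicit. Unset Printing Implicit Defensive.
Import Order.TTheory GRing.Theory Num.Theory.
Import numFieldNormedType.Exports.
Local Open Scope classical_set_scope.
Local Open Scope ring_scope.

(* Uniform norm on C(X): ||f|| = max_{x in X} |f x| (a sup, which is attained
   for continuous f on a nonempty compact X). *)
Definition supnorm {R : realType} {X : Type} (f : X -> R) : R :=
  sup [set `|f x| | x in [set: X]].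

Definition simul_err {R : realType} {X A : Type} (F : A -> X -> R) (h : X -> R) : R :=
  sup [set supnorm (fun x => F a x - h x) | a in [set: A]].

Definition subspace_dim {R : realType} {X : topologicalType} (n : nat)
    (H : set (X -> R)) : Prop :=
  (forall f, H f -> continuous f) /\
  exists phi : 'I_n -> X -> R,
    (forall i, H (phi i)) /\
    (forall c : 'I_n -> R, (fun x => \sum_(i < n) c i * phi i x) = (fun=> 0) ->
        forall i, c i = 0) /\
    (forall f, H f <-> exists c : 'I_n -> R, f = (fun x => \sum_(i < n) c i * phi i x)).

Definition haar_subspace {R : realType} {X : topologicalType} (n : nat)
    (H : set (X -> R)) : Prop :=
  subspace_dim n H /\
  forall (xs : 'I_n -> X), injective xs ->
    forall r : 'I_n -> R, exists! f, H f /\ forall j, f (xs j) = r j.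

Definition unif_continuous_family {R : realType} {X A : topologicalType}
    (F : A -> X -> R) : Prop :=
  forall a0 : A, forall e : R, 0 < e ->
    \forall a \near a0, forall x : X, `|F a x - F a0 x| < e.

From HB Require Import structures.
From mathcomp Require Import all_boot all_order all_algebra.
From mathcomp Require Import all_classical all_reals all_analysis.
From mathcomp Require Import lra.
Set Implicit Arguments. Unset Strict Implicit. Unset Printing Implicit Defensive.
Import Order.TTheory GRing.Theory Num.Theory.
Import numFieldNormedType.Exports.
Local Open Scope classical_set_scope.
Local Open Scope ring_scope.

(* Let E be the minimal error, r_i = f_(a_i)(x_i) - f*(x_i), so |r_i| = E > 0,
   and g = f* - h.  Then t_i = r_i g(x_i) / E satisfies
   E + t_i = r_i (r_i + g(x_i)) / E <= |f_(a_i)(x_i) - h(x_i)| <= err(h), and by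
   (i') the lambda-weighted mean of the t_i vanishes, so
   lambda_i |g(x_i)| = lambda_i |t_i| <= err(h) - E for every i.  Condition (i')
   also forces k = n + 1 (an f in H interpolating the r_i would give E^2 = 0), so
   the x_i contain n distinct nodes, and the Lagrange basis of H at these nodes
   bounds ||g|| by a fixed combination of the |g(x_i)|. *)

Lemma compact_continuous_bounded (R : realType) (X : topologicalType)
    (f : X -> R) :
  compact [set: X] -> continuous f -> exists2 M, 0 <= M & forall x, `|f x| <= M.
Proof.
move=> cX cf.
have /compact_bounded [M [Mr HM]] : compact (f @` [set: X]).
  by apply: continuous_compact => //; exact: continuous_subspaceT.
exists (`|M| + 1) => [|x]; first by rewrite addr_ge0.
apply: (HM (`|M| + 1)) => //.
by rewrite (le_lt_trans (real_ler_norm Mr)) // ltrDl.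
Qed.

Lemma ler_supnorm (R : realType) (X : topologicalType) (f : X -> R) x :
  compact [set: X] -> continuous f -> `|f x| <= supnorm f.
Proof.
move=> cX cf; have [M _ HM] := compact_continuous_bounded cX cf.
apply: sup_upper_bound; last by exists x.
by split; [exists `|f x|, x | exists M => _ [y _ <-]].
Qed.

Lemma supnorm_le (R : realType) (X : Type) (f : X -> R) (x0 : X) c :
  (forall x, `|f x| <= c) -> supnorm f <= c.
Proof.
move=> fc; apply: ge_sup; first by exists `|f x0|, x0.
by move=> _ [y _ <-].
Qed.

(* An unbounded family has error [0] by convention of [sup], hence the
   positivity hypothesis. *)
Lemma le_simul_err (R : realType) (X A : Type) (F : A -> X -> R) h b :
  0 < simul_err F h -> supnorm (fun x => F b x - h x) <= simul_err F h.
Proof.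
move=> err_gt0; apply: sup_upper_bound; last by exists b.
apply: contrapT => /sup_out err0.
by move: err_gt0; rewrite /simul_err err0 ltxx.
Qed.

Lemma injective_extend (T : eqType) k n m (xs : 'I_k -> T) (p : 'I_m.+1 -> T) :
  (k <= n)%N -> (n <= m.+1)%N -> injective xs -> injective p ->
  exists ys : 'I_n -> T, injective ys /\
    forall (i : 'I_k) (j : 'I_n), i = j :> nat -> ys j = xs i.
Proof.
move=> kn nm ixs ip.
pose s := [seq xs i | i <- enum 'I_k].
pose t := [seq p i | i <- enum 'I_m.+1].
pose l := s ++ [seq y <- t | y \notin s].
have us : uniq s by rewrite map_inj_uniq ?enum_uniq.
have ut : uniq t by rewrite map_inj_uniq ?enum_uniq.
have ul : uniq l.
  rewrite cat_uniq us filter_uniq // andbT.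
  by apply/hasPn => y; rewrite mem_filter => /andP[].
have size_s : size s = k by rewrite size_map size_enum_ord.
have size_l : (m.+1 <= size l)%N.
  rewrite -[m.+1](size_enum_ord) -(size_map p); apply: uniq_leq_size => //.
  by move=> y ty; rewrite mem_cat mem_filter ty andbT; case: (y \in s).
exists (fun j => nth (p ord0) l j); split.
  move=> j1 j2 /eqP; rewrite nth_uniq // => [/eqP/val_inj //||];
    by apply: leq_trans (leq_trans nm size_l).
move=> i j <-; rewrite nth_cat size_s ltn_ord.
by rewrite (nth_map i) ?size_enum_ord // nth_ord_enum.
Qed.

Section SubspaceFacts.
Variables (R : realType) (X : topologicalType) (n : nat) (H : set (X -> R)).

Section Linear.
Hypothesis Hdim : subspace_dim n H.

Lemma subspace_sum m (d : 'I_m -> R) (L : 'I_m -> X -> R) :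
  (forall j, H (L j)) -> H (fun x => \sum_(j < m) d j * L j x).
Proof.
case: Hdim => _ [phi [_ [_ Hspan]]] HL.
have /choice [C HC] : forall j, exists c : 'I_n -> R,
    L j = (fun x => \sum_(i < n) c i * phi i x) by move=> j; apply/Hspan.
apply/Hspan; exists (fun i => \sum_(j < m) d j * C j i); apply: funext => x.
under eq_bigr => j _ do rewrite HC mulr_sumr.
rewrite exchange_big; apply: eq_bigr => i _.
by rewrite mulr_suml; apply: eq_bigr => j _; rewrite mulrA.
Qed.

Lemma subspace_sub f g : H f -> H g -> H (fun x => f x - g x).
Proof.
case: Hdim => _ [phi [_ [_ Hspan]]] /Hspan[c ->] /Hspan[c' ->].
apply/Hspan; exists (fun i => c i - c' i); apply: funext => x.
by rewrite -sumrB; apply: eq_bigr => i _; rewrite mulrBl.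
Qed.

End Linear.

Section Haar.
Hypothesis Hhaar : haar_subspace n H.

Lemma haar_interpolate k m (xs : 'I_k -> X) (p : 'I_m.+1 -> X) :
  (k <= n)%N -> (n <= m.+1)%N -> injective xs -> injective p ->
  forall r : 'I_k -> R, exists f, H f /\ forall i, f (xs i) = r i.
Proof.
move=> kn nm ixs ip r.
have [ys [iys ys_xs]] := injective_extend kn nm ixs ip.
pose rn (j : 'I_n) := nth 0 [seq r i | i <- enum 'I_k] j.
have [f [[Hf frn] _]] := Hhaar.2 ys iys rn.
exists f; split => // i.
have ilt : (i < n)%N := leq_trans (ltn_ord i) kn.
rewrite -(ys_xs i (Ordinal ilt)) // frn /rn /=.
by rewrite (nth_map i) ?size_enum_ord // nth_ord_enum.
Qed.

Lemma haar_lagrange_expansion (ys : 'I_n -> X) : injective ys ->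
  exists L : 'I_n -> X -> R, (forall j, H (L j)) /\
    forall g, H g -> g = (fun x => \sum_(j < n) g (ys j) * L j x).
Proof.
move=> iys.
have /choice [L HL] : forall j : 'I_n, exists f, H f /\
    forall l, f (ys l) = (j == l)%:R.
  by move=> j; have [f [Hf _]] := Hhaar.2 ys iys (fun l => (j == l)%:R); exists f.
exists L; split=> [j | g Hg]; first exact: (HL j).1.
have [f [_ f_uniq]] := Hhaar.2 ys iys (fun l => g (ys l)).
rewrite -[LHS](f_uniq g) //; apply: f_uniq; split.
  by apply: (subspace_sum Hhaar.1) => j; exact: (HL j).1.
move=> l; rewrite (bigD1 l) //= (HL l).2 eqxx mulr1 big1 ?addr0 // => j jl.
by rewrite (HL j).2 (negbTE jl) mulr0.
Qed.

Lemma haar_norm_le_nodes (ys : 'I_n -> X) : compact [set: X] -> injective ys ->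
  exists2 B : 'I_n -> R, (forall j, 0 <= B j) &
    forall g x, H g -> `|g x| <= \sum_(j < n) B j * `|g (ys j)|.
Proof.
move=> cX iys; have [L [HL expand]] := haar_lagrange_expansion iys.
have /choice [B HB] : forall j, exists B,
    0 <= B /\ forall x, `|L j x| <= B.
  move=> j; have [B B0 LB] := compact_continuous_bounded cX (Hhaar.1.1 _ (HL j)).
  by exists B.
exists B => [j | g x Hg]; first exact: (HB j).1.
rewrite {1}(expand g Hg); apply: le_trans (ler_norm_sum _ _ _) _.
apply: ler_sum => j _; rewrite normrM mulrC.
by apply: ler_wpM2r; [exact: normr_ge0 | exact: (HB j).2].
Qed.

End Haar.
End SubspaceFacts.

Lemma zero_mean_weighted_abs_le (R : realFieldType) k (lam t : 'I_k -> R) M :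
  (forall i, 0 < lam i) -> \sum_(i < k) lam i = 1 ->
  \sum_(i < k) lam i * t i = 0 -> (forall i, t i <= M) ->
  forall i, lam i * `|t i| <= M.
Proof.
move=> lam_gt0 lam1 mean0 tM i.
have sumM : \sum_(j < k) lam j * (M - t j) = M.
  under eq_bigr => j _ do rewrite mulrBr.
  by rewrite sumrB mean0 subr0 -mulr_suml lam1 mul1r.
have M_ge : lam i * (M - t i) <= M.
  rewrite -[X in _ <= X]sumM (bigD1 i) //= lerDl; apply: sumr_ge0 => j _.
  by apply: mulr_ge0; [exact: ltW | rewrite subr_ge0].
have lam_le1 : lam i <= 1.
  by rewrite -lam1 (bigD1 i) //= lerDl; apply: sumr_ge0 => j _; exact: ltW.
have lam_gt0i := lam_gt0 i; have tMi := tM i.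
by case: (lerP 0 (t i)) => ti0; [rewrite ger0_norm | rewrite ltr0_norm]; nra.
Qed.

Lemma weighted_deviation_le (R : realFieldType) k (lam r g : 'I_k -> R) (E e : R) :
  (forall i, 0 < lam i) -> \sum_(i < k) lam i = 1 ->
  0 < E -> (forall i, `|r i| = E) ->
  \sum_(i < k) lam i * r i * g i = 0 -> (forall i, `|r i + g i| <= e) ->
  forall i, lam i * `|g i| <= e - E.
Proof.
move=> lam_gt0 lam1 E_gt0 rE orth rg_le i.
have t_norm j : `|r j * g j / E| = `|g j|.
  by rewrite !normrM normfV rE (gtr0_norm E_gt0) mulrAC mulfV ?gt_eqF ?mul1r.
rewrite -t_norm.
apply: (zero_mean_weighted_abs_le (t := fun j => r j * g j / E)) => // [|j].
  under eq_bigr => j _ do rewrite !mulrA.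
  by rewrite -mulr_suml orth mul0r.
rewrite lerBrDl; apply: le_trans (rg_le j).
have -> : E + r j * g j / E = r j * (r j + g j) / E.
  by rewrite mulrDr mulrDl -expr2 -(real_normK (num_real _)) rE expr2 mulfK ?gt_eqF.
by rewrite ler_pdivrMr // -(rE j) -normrM mulrC real_ler_norm ?num_real.
Qed.

Theorem theorem4 (R : realType) (X A : topologicalType) (n : nat)
  (H : set (X -> R)) (F : A -> X -> R) (fstar : X -> R)
  (k : nat) (a : 'I_k -> A) (xs : 'I_k -> X) (lam : 'I_k -> R) :
  (1 <= n)%N ->
  hausdorff_space X -> compact [set: X] ->
  (exists p : 'I_n.+1 -> X, injective p) ->
  haar_subspace n H ->
  hausdorff_space A -> compact [set: A] ->
  (forall b : A, continuous (F b)) ->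
  unif_continuous_family F ->
  H fstar ->
  (forall f, H f -> simul_err F fstar <= simul_err F f) ->
  (1 <= k <= n.+1)%N ->
  (forall i, 0 < lam i) ->
  \sum_(i < k) lam i = 1 ->
  (forall f, H f ->
     \sum_(i < k) lam i * (F (a i) (xs i) - fstar (xs i)) * f (xs i) = 0) ->
  (forall i, `|F (a i) (xs i) - fstar (xs i)|
               = supnorm (fun x => F (a i) x - fstar x) /\
             supnorm (fun x => F (a i) x - fstar x) = simul_err F fstar) ->
  injective xs ->
  simul_err F fstar != 0 ->
  exists gamma : R, 0 < gamma /\
    forall h, H h ->
      simul_err F fstar + gamma * supnorm (fun x => fstar x - h x)
        <= simul_err F h.
Proof.
move=> _ _ cX [p ip] Hhaar _ _ Fc _ Hfs Hopt /andP[k1 kn] lam_gt0 lam1 orth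
  Hnorm ixs E0.
set E := simul_err F fstar in Hopt Hnorm E0 *.
pose r i := F (a i) (xs i) - fstar (xs i).
have rE i : `|r i| = E by have [-> ->] := Hnorm i.
have E_gt0 : 0 < E by rewrite lt_def E0 -(rE (Ordinal k1)) normr_ge0.
have kE : k = n.+1.
  apply/eqP; rewrite eqn_leq kn ltnNge; apply/negP => kn'.
  have [f [Hf fr]] := haar_interpolate Hhaar kn' (leqnSn n) ixs ip r.
  move: (orth f Hf); under eq_bigr => i _ do rewrite fr -mulrA -expr2 -(real_normK (num_real _)) rE.
  by rewrite -mulr_suml lam1 mul1r => /eqP; rewrite sqrf_eq0 (negbTE E0).
subst k.
pose w (j : 'I_n) := widen_ord (leqnSn n) j.
have ixw : injective (xs \o w) by move=> j1 j2 /ixs [] /val_inj.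
have [B B_ge0 gB] := haar_norm_le_nodes Hhaar cX ixw.
pose K := \sum_(j < n) B j / lam (w j).
have K_ge0 : 0 <= K by apply: sumr_ge0 => j _; rewrite divr_ge0 // ltW.
exists (1 + K)^-1; split=> [|h Hh]; first by rewrite invr_gt0 ltr_wpDr.
pose g x := fstar x - h x.
have Hg : H g := subspace_sub Hhaar.1 Hfs Hh.
have E_le : E <= simul_err F h := Hopt h Hh.
have dev i : lam i * `|g (xs i)| <= simul_err F h - E.
  apply: (weighted_deviation_le (g := fun i => g (xs i)) lam_gt0 lam1 E_gt0 rE
    (orth g Hg)) => {}i.
  rewrite /r /g addrA subrK.
  apply: le_trans (le_simul_err (a i) (lt_le_trans E_gt0 E_le)).
  apply: ler_supnorm cX _ => x.
  by apply: cvgB; [exact: Fc | exact: (Hhaar.1.1 h Hh x)].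
have g_le : supnorm g <= K * (simul_err F h - E).
  apply: (supnorm_le (xs ord0)) => x; apply: le_trans (gB g x Hg) _.
  rewrite /K mulr_suml; apply: ler_sum => j _.
  by rewrite -mulrA ler_wpM2l // ler_pdivlMl //; exact: dev.
rewrite addrC -lerBrDr ler_pdivrMl ?ltr_wpDr //; apply: le_trans g_le _.
by rewrite mulrDl mul1r lerDr subr_ge0.
Qed.
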